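(* Let $f:\mathbb{R}^m\to\mathbb{R}\cup\{+\infty\}$ be a proper lower semicontinuous convex function and let $\bar x\in\mathbb{R}^m$ be such that $f(\bar x)=0$. Then the following are equivalent: (i) $\min_{\|h\|=1}f'(\bar x,h)\neq 0$; (ii) there exist constants $c,\varepsilon>0$ such that for every proper lower semicontinuous convex $g:\mathbb{R}^m\to\mathbb{R}\cup\{+\infty\}$ with $\bar x\in S_g$ and $$\limsup_{x\to\bar x}\frac{|(f(x)-g(x))-(f(\bar x)-g(\bar x))|}{\|x-\bar x\|}\le\varepsilon,$$ one has $\tau_{\min}(g,\bar x)\le c$; (iii) there exist constants $c,\varepsilon>0$ such that for all $u^*\in\mathbb{R}^m$ with $\|u^*\|\le1$, one has $\tau_{\min}(g_{u^*,\varepsilon},\bar x)\le c$, where $g_{u^*,\varepsilon}(x):=f(x)+\varepsilon\langle u^*,x-\bar x\rangle$ for all $x\in\mathbb{R}^m$.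
   Context: $\mathbb{R}^m$ carries the Euclidean norm, $B(\bar x,\delta)$ is the closed ball of radius $\delta$ around $\bar x$, and $d(x,D)=\inf\{\|x-y\|:y\in D\}$ (with $\inf\emptyset=+\infty$). $f'(\bar x,h):=\lim_{t\to0^+}\frac{f(\bar x+th)-f(\bar x)}{t}$ is the directional derivative. For a proper lsc convex $g$, $S_g:=\{x: g(x)\le0\}$ and the local error bound modulus at $\bar x$ is $\tau_{\min}(g,\bar x):=\inf\{\tau>0:\exists\delta>0 \text{ with } d(x,S_g)\le\tau[g(x)]_+\ \forall x\in B(\bar x,\delta)\}$, where $[t]_+=\max\{t,0\}$ and $\inf\emptyset=+\infty$. *)

From HB Require Import structures.
From mathcomp Require Import all_boot all_order all_algebra.
From mathcomp Require Import all_classical all_reals all_analysis.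
Set Implicit Arguments. Unset Strict Implicit. Unset Printing Implicit Defensive.
Import Order.TTheory GRing.Theory Num.Theory.
Import numFieldNormedType.Exports.
Local Open Scope classical_set_scope.
Local Open Scope ring_scope.

Section Defs.
Variables (R : realType) (m : nat).
Notation V := 'rV[R]_m.

Definition inner (u v : V) : R := \sum_(i < m) u 0 i * v 0 i.
Definition enorm (v : V) : R := Num.sqrt (\sum_(i < m) v 0 i ^+ 2).

Definition eproper (f : V -> \bar R) : Prop :=
  (forall x, f x != -oo%E) /\ (exists x, f x \is a fin_num).

Definition elsc (f : V -> \bar R) : Prop :=
  forall (x : V) (a : R), (a%:E < f x)%E ->
    exists2 d : R, 0 < d & forall y : V, enorm (y - x) < d -> (a%:E < f y)%E.

Definition econvex (f : V -> \bar R) : Prop :=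
  forall (x y : V) (t : R), 0 < t -> t < 1 ->
    (f (t *: x + (1 - t) *: y)%R <= t%:E * f x + (1 - t)%:E * f y)%E.

Definition dir_deriv (f : V -> \bar R) (x h : V) : \bar R :=
  lim ((fun t : R => ((f (x + t *: h)%R - f x) * (t^-1)%:E)%E) @ 0^'+).

Definition sublevel0 (g : V -> \bar R) : set V := [set x | (g x <= 0)%E].

(* d(x,D) = inf {||x - y|| : y in D}, with inf of the empty set = +oo *)
Definition edist (x : V) (D : set V) : \bar R :=
  ereal_inf [set (enorm (x - y))%:E | y in D].

Definition tau_min (g : V -> \bar R) (xbar : V) : \bar R :=
  ereal_inf [set tau%:E | tau in [set tau : R | 0 < tau /\
     exists2 d : R, 0 < d & forall x, enorm (x - xbar) <= d ->
        (edist x (sublevel0 g) <= tau%:E * maxe (g x) 0)%E]].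

Definition elimsup_at (F : V -> \bar R) (xbar : V) : \bar R :=
  ereal_inf [set ereal_sup [set F x | x in [set x | 0 < enorm (x - xbar) < d]]
            | d in [set d : R | 0 < d]].

(* difference of extended reals with the convention (+oo) - (+oo) = 0 *)
Definition ediff (a b : \bar R) : \bar R :=
  if (a == +oo%E) && (b == +oo%E) then 0%E else (a - b)%E.

End Defs.

From Pilot Require Import Defs.
From HB Require Import structures.
From mathcomp Require Import all_boot all_order all_algebra.
From mathcomp Require Import all_classical all_reals all_analysis.
From mathcomp Require Import ring lra.
Set Implicit Arguments.
Unset Strict Implicit.
Unset Printing Implicit Defensive.
Import Order.TTheory GRing.Theory Num.Theory.
Import numFieldNormedType.Exports.
Local Open Scope classical_set_scope.
Local Open Scope ring_scope.

(* For convex f with f xbar = 0 the quotients (f (xbar + t h) - f xbar) / t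
   decrease to f'(xbar, h) as t -> 0+.  If f'(xbar, h) < 0 for a unit h, then f,
   and every g whose difference with f has small slope at xbar, is negative at
   z = xbar + t h; if f'(xbar, .) >= al > 0 on the unit sphere, then f and every
   such g grow linearly away from xbar.  In both cases convexity of g along the
   segment from a point x with g x > 0 to z (resp. xbar) reaches S_g within a
   distance proportional to g x, which is (ii).  Tilting f by an affine map of
   slope eps is such a perturbation, whence (iii).  If the minimal slope is 0,
   then f >= 0, and tilting along a direction h of slope below 1/(4c) keeps S_g
   in the half-space <h, x - xbar> <= 0 while g (xbar + t h) < t / (2c); this
   forces tau_min >= 2c, so (iii) fails. *)

Section Euclidean.
Variables (R : realType) (m : nat).
Notation V := 'rV[R]_m.
Implicit Types (u v w x y z : V).

Lemma innerC u v : inner u v = inner v u.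
Proof. by apply: eq_bigr => i _; rewrite mulrC. Qed.

Lemma innerDl u v w : inner (u + v) w = inner u w + inner v w.
Proof. by rewrite /inner -big_split; apply: eq_bigr => i _; rewrite mxE mulrDl. Qed.

Lemma innerZl a u v : inner (a *: u) v = a * inner u v.
Proof. by rewrite /inner mulr_sumr; apply: eq_bigr => i _; rewrite mxE mulrA. Qed.

Lemma innerBl u v w : inner (u - v) w = inner u w - inner v w.
Proof. by rewrite innerDl -scaleN1r innerZl mulN1r. Qed.

Lemma innerDr u v w : inner w (u + v) = inner w u + inner w v.
Proof. by rewrite innerC innerDl !(innerC w). Qed.

Lemma innerZr a u v : inner v (a *: u) = a * inner v u.
Proof. by rewrite innerC innerZl innerC. Qed.

Lemma innerBr u v w : inner w (u - v) = inner w u - inner w v.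
Proof. by rewrite innerC innerBl !(innerC w). Qed.

Lemma inner_ge0 u : 0 <= inner u u.
Proof. by apply: sumr_ge0 => i _; rewrite -expr2 sqr_ge0. Qed.

Lemma enormE u : enorm u = Num.sqrt (inner u u).
Proof. by congr Num.sqrt; apply: eq_bigr => i _; rewrite expr2. Qed.

Lemma enorm_ge0 u : 0 <= enorm u.
Proof. exact: sqrtr_ge0. Qed.

Lemma enorm_sqr u : enorm u ^+ 2 = inner u u.
Proof. by rewrite enormE sqr_sqrtr // inner_ge0. Qed.

Lemma enormZ a u : enorm (a *: u) = `|a| * enorm u.
Proof.
rewrite enormE innerZl innerZr mulrA -expr2 sqrtrM ?sqr_ge0 //.
by rewrite sqrtr_sqr -enormE.
Qed.

Lemma enorm_distC u v : enorm (u - v) = enorm (v - u).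
Proof. by rewrite -opprB -scaleN1r enormZ normrN normr1 mul1r. Qed.

Lemma enorm_gt0 u : (0 < enorm u) = (u != 0).
Proof.
rewrite enormE sqrtr_gt0 lt_def inner_ge0 andbT; apply/idP/idP.
  by apply: contra_neq => ->; rewrite /inner big1 // => i _; rewrite mxE mul0r.
apply: contra_neq => /eqP/eqP u0; apply/matrixP => i j; rewrite ord1 mxE.
have sq_ge0 k : true -> 0 <= u 0 k * u 0 k by rewrite -expr2 sqr_ge0.
have /eqP := @psumr_eq0P _ _ _ _ sq_ge0 u0 j isT.
by rewrite mulf_eq0 orbb => /eqP.
Qed.

Lemma enorm0 : enorm (0 : V) = 0.
Proof. by apply/eqP; rewrite eq_le enorm_ge0 andbT leNgt enorm_gt0 eqxx. Qed.

Lemma cauchy_schwarz u v : `|inner u v| <= enorm u * enorm v.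
Proof.
set A := inner u u; set B := inner v v; set P := inner u v.
have quad s : 0 <= s ^+ 2 * A + 2 * s * P + B.
  have := inner_ge0 (s *: u + v).
  rewrite innerDl !innerDr !innerZl !innerZr (innerC v u) -/A -/B -/P.
  by congr (_ <= _); ring.
have discr : P ^+ 2 <= A * B.
  have [A0|A_neq0] := eqVneq A 0.
    suff -> : P = 0 by rewrite A0 expr0n mul0r.
    have [//|P_neq0] := eqVneq P 0; have := quad (- (B + 1) / (2 * P)).
    have -> : 2 * (- (B + 1) / (2 * P)) * P = - (B + 1) by field.
    rewrite A0 mulr0 add0r; lra.
  have A_gt0 : 0 < A by rewrite lt_def A_neq0 inner_ge0.
  have := quad (- P / A).
  have -> : (- P / A) ^+ 2 * A + 2 * (- P / A) * P + B = B - P ^+ 2 / A.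
    by field.
  by rewrite subr_ge0 ler_pdivrMr // mulrC.
rewrite -sqrtr_sqr !enormE -sqrtrM ?inner_ge0 //.
by rewrite ler_sqrt // mulr_ge0 // inner_ge0.
Qed.

Lemma ler_enormD u v : enorm (u + v) <= enorm u + enorm v.
Proof.
rewrite -(ger0_norm (addr_ge0 (enorm_ge0 u) (enorm_ge0 v))) -sqrtr_sqr enormE.
rewrite ler_sqrt ?sqr_ge0 // innerDl !innerDr (innerC v u) sqrrD !enorm_sqr.
have := cauchy_schwarz u v; have := ler_norm (inner u v); lra.
Qed.

Lemma ler_norm_inner u v : enorm u <= 1 -> `|inner u v| <= enorm v.
Proof.
move=> u1; apply: le_trans (cauchy_schwarz u v) _.
by rewrite ler_piMl ?enorm_ge0.
Qed.

Lemma convex_combB x y z t :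
  t *: x + (1 - t) *: y - z = t *: (x - z) + (1 - t) *: (y - z).
Proof. by apply/matrixP => i j; rewrite !mxE; ring. Qed.

End Euclidean.

Section DirectionalDerivative.
Variables (R : realType) (m : nat).
Notation V := 'rV[R]_m.
Local Open Scope ereal_scope.

Definition dquot (f : V -> \bar R) (x h : V) (t : R) : \bar R :=
  (f (x + t *: h)%R - f x) * (t^-1)%:E.

Variables (f : V -> \bar R) (x : V) (fx : R).
Hypotheses (convex_f : econvex f) (fxE : f x = fx%:E).

Lemma dquot_nondecreasing (h : V) (s t : R) :
  (0 < s)%R -> (s <= t)%R -> dquot f x h s <= dquot f x h t.
Proof.
move=> s0 st; have t0 : (0 < t)%R := lt_le_trans s0 st.
have [<-//|s_neq_t] := eqVneq s t.
set l := (s / t)%R.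
have l0 : (0 < l)%R by rewrite divr_gt0.
have l1 : (l < 1)%R by rewrite ltr_pdivrMr // mul1r lt_def eq_sym s_neq_t.
have := convex_f (x + t *: h)%R x l0 l1.
have -> : (l *: (x + t *: h) + (1 - l) *: x = x + s *: h)%R.
  by rewrite scalerDr scalerA divfK ?gt_eqF // addrAC -scalerDl subrKC scale1r.
have sV0 : 0 < (s^-1)%:E by rewrite lte_fin invr_gt0.
have tV0 : 0 < (t^-1)%:E by rewrite lte_fin invr_gt0.
have lE0 : 0 < l%:E by rewrite lte_fin.
rewrite /dquot fxE.
case: (f (x + t *: h)%R) => [b| |]; case: (f (x + s *: h)%R) => [a| |] //.
all: rewrite ?(gt0_muley lE0) ?(gt0_muleNy lE0) ?addye ?addNye ?addeNy //.
all: rewrite ?(gt0_mulye sV0) ?(gt0_mulye tV0) ?(gt0_mulNye sV0) ?leey ?leNye //.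
rewrite -!EFinM -EFinD !lee_fin => a_le.
have -> : ((b - fx) / t = l * (b - fx) / s)%R by rewrite /l; field; rewrite !gt_eqF.
by rewrite ler_pM2r ?invr_gt0 //; lra.
Qed.

Lemma dir_derivE (h : V) :
  dir_deriv f x h = ereal_inf [set dquot f x h t | t in [set t | (0 < t)%R]].
Proof.
rewrite /dir_deriv; have /(_ _)/cvg_lim -> := @nondecreasing_at_right_cvge R (dquot f x h) 0%R
  (BInfty _ false) isT.
- by congr ereal_inf; apply/seteqP; split=> _ [t t0 <-]; exists t;
    rewrite //= in_itv /= andbT in t0 *.
- exact: ereal_hausdorff.
- by move=> s t; rewrite !in_itv /= !andbT => s0 _; exact: dquot_nondecreasing.
Qed.

Lemma dir_deriv_le_dquot (h : V) (t : R) :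
  (0 < t)%R -> dir_deriv f x h <= dquot f x h t.
Proof. by move=> t0; rewrite dir_derivE; apply: ereal_inf_lbound; exists t. Qed.

Lemma dir_deriv_lt_dquot (h : V) (b : \bar R) : dir_deriv f x h < b ->
  exists2 t0 : R, (0 < t0)%R &
    forall t, (0 < t)%R -> (t <= t0)%R -> dquot f x h t < b.
Proof.
rewrite dir_derivE => /ereal_inf_lt[_ [t0 /= t0_gt0 <-] dq_lt].
by exists t0 => // t t_gt0 t_le; apply: le_lt_trans dq_lt; exact: dquot_nondecreasing.
Qed.

Lemma dir_deriv_growth (al : R) : (forall y, f y != -oo) ->
  (forall h, enorm h = 1%R -> al%:E <= dir_deriv f x h) ->
  forall y, (fx + al * enorm (y - x))%:E <= f y.
Proof.
move=> fN al_le y; have [->|y_neq_x] := eqVneq y x.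
  by rewrite fxE subrr enorm0 mulr0 addr0.
have t0 : (0 < enorm (y - x))%R by rewrite enorm_gt0 subr_eq0.
set t := enorm (y - x) in t0 *; set h := (t^-1 *: (y - x))%R.
have h1 : enorm h = 1%R by rewrite enormZ gtr0_norm ?invr_gt0 // mulVf ?gt_eqF.
have := le_trans (al_le h h1) (dir_deriv_le_dquot h t0).
rewrite /dquot /h scalerA divff ?gt_eqF // scale1r subrKC fxE.
case: (f y) (fN y) => [a| |] // _ ; rewrite ?leey //.
by rewrite -EFinB -EFinM !lee_fin ler_pdivlMr // => ?; lra.
Qed.

End DirectionalDerivative.

Section ErrorBounds.
Variables (R : realType) (m : nat).
Notation V := 'rV[R]_m.
Implicit Types (g : V -> \bar R) (p w x y xbar : V).

Lemma edist_le x y (S : set V) : S y -> (Defs.edist x S <= (enorm (x - y))%:E)%E.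
Proof. by move=> Sy; apply: ereal_inf_lbound; exists y. Qed.

Lemma sublevel0_segment g x p (r b c : R) : econvex g -> 0 <= c ->
  g x = r%:E -> 0 < r -> g p = b%:E -> b <= 0 -> enorm (x - p) <= c * (r - b) ->
  exists2 w, sublevel0 g w & enorm (x - w) <= c * r.
Proof.
move=> convex_g c_ge0 gx r_gt0 gp; rewrite le_eqVlt => /orP[/eqP b0|b_lt0] xp.
  by exists p; [rewrite /sublevel0 /= gp b0 | rewrite b0 subr0 in xp].
have rb_gt0 : 0 < r - b by lra.
(* the chord of g from b at p to r at x vanishes at s *)
set s := r / (r - b).
have s_gt0 : 0 < s by rewrite divr_gt0.
have s_lt1 : s < 1 by rewrite ltr_pdivrMr // mul1r; lra.
exists (s *: p + (1 - s) *: x).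
  have := convex_g p x s s_gt0 s_lt1; rewrite /sublevel0 /= gp gx -!EFinM -EFinD.
  by have -> : s * b + (1 - s) * r = 0 by rewrite /s; field; rewrite gt_eqF.
have -> : x - (s *: p + (1 - s) *: x) = s *: (x - p).
  by apply/matrixP => i j; rewrite !mxE; ring.
rewrite enormZ gtr0_norm //; apply: le_trans (ler_wpM2l (ltW s_gt0) xp) _.
by rewrite /s mulrCA divfK ?gt_eqF.
Qed.

Lemma tau_min_le g xbar (c d : R) : (forall x, g x != -oo%E) -> 0 < c -> 0 < d ->
  (forall x (r : R), enorm (x - xbar) <= d -> g x = r%:E -> 0 < r ->
     exists2 w, sublevel0 g w & enorm (x - w) <= c * r) ->
  (tau_min g xbar <= c%:E)%E.
Proof.
move=> gN c_gt0 d_gt0 segment; apply: ereal_inf_lbound; exists c => //.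
split=> //; exists d => // x x_near.
have [gx_le0|gx_gt0] := leP (g x) 0%E.
  by apply: le_trans (@edist_le x x (sublevel0 g) gx_le0) _; rewrite subrr enorm0 mule0.
move: gx_gt0 (gN x) (segment x); case: (g x) => [r| |] // r_gt0 _.
  move=> /(_ r x_near erefl); rewrite -lte_fin => /(_ r_gt0)[w Sw xw].
  by rewrite -EFinM; apply: le_trans (@edist_le x w (sublevel0 g) Sw) _; rewrite lee_fin.
by move=> _; rewrite gt0_muley ?lte_fin ?leey.
Qed.

Lemma tau_min_ge g xbar (c : R) :
  (forall d, 0 < d -> exists2 x, enorm (x - xbar) <= d &
     (c%:E * maxe (g x) 0 < Defs.edist x (sublevel0 g))%E) ->
  (c%:E <= tau_min g xbar)%E.
Proof.
move=> far; apply/ereal_infP => _ [tau [_ [d d_gt0 bound]] <-].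
have [x x_near cM_lt] := far d d_gt0.
rewrite leNgt; apply/negP => tau_lt_c.
have M_ge0 : (0 <= maxe (g x) 0)%E by rewrite le_max lexx orbT.
have := lt_le_trans cM_lt (bound x x_near); rewrite ltNge => /negP; apply.
exact: lee_wpmul2r (ltW tau_lt_c).
Qed.

Lemma elimsup_at_le (F : V -> \bar R) xbar (e : \bar R) (d : R) : 0 < d ->
  (forall x, 0 < enorm (x - xbar) < d -> (F x <= e)%E) -> (elimsup_at F xbar <= e)%E.
Proof.
move=> d_gt0 F_le; apply: ge_ereal_inf; eexists; first by exists d.
by apply: ge_ereal_sup => _ [x x_near <-]; exact: F_le.
Qed.

Lemma elimsup_at_lt (F : V -> \bar R) xbar (e : \bar R) : (elimsup_at F xbar < e)%E ->
  exists2 d : R, 0 < d & forall x, 0 < enorm (x - xbar) < d -> (F x < e)%E.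
Proof.
move=> /ereal_inf_lt[_ [d d_gt0 <-] sup_lt]; exists d => // x x_near.
by apply: le_lt_trans sup_lt; apply: ereal_sup_ubound; exists x.
Qed.

End ErrorBounds.

Section Perturbation.
Variables (R : realType) (m : nat).
Notation V := 'rV[R]_m.
Implicit Types (f g : V -> \bar R) (L : V -> R) (x y xbar : V).

Definition ediff_quot f g xbar x : \bar R :=
  (`| ediff (f x) (g x) - (f xbar - g xbar) | * ((enorm (x - xbar))^-1)%:E)%E.

Lemma ediff_quot_lt f g xbar x (fb gb e : R) :
  f xbar = fb%:E -> g xbar = gb%:E -> f x != -oo%E -> g x != -oo%E ->
  0 < enorm (x - xbar) -> (ediff_quot f g xbar x < e%:E)%E ->
  (f x = +oo%E /\ g x = +oo%E) \/
  exists a b : R,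
    [/\ f x = a%:E, g x = b%:E & `|a - b - (fb - gb)| <= e * enorm (x - xbar)].
Proof.
rewrite /ediff_quot /ediff => -> -> + + x_near.
have inv_gt0 : (0 < ((enorm (x - xbar))^-1)%:E)%E by rewrite lte_fin invr_gt0.
case: (f x) => [a| |] //; case: (g x) => [b| |] // _ _ /=; last by left.
- move=> quot_lt; right; exists a, b; split => //.
  by move: quot_lt; rewrite -EFinM lte_fin ltr_pdivrMr // => /ltW.
- by rewrite gt0_mulye // ltNge leey.
- by rewrite gt0_mulye // ltNge leey.
Qed.

Lemma elimsup_ediff_quot_lt f g xbar (fb gb e : R) :
  f xbar = fb%:E -> g xbar = gb%:E -> (forall x, f x != -oo%E) ->
  (forall x, g x != -oo%E) -> (elimsup_at (ediff_quot f g xbar) xbar < e%:E)%E ->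
  exists2 d : R, 0 < d & forall x, 0 < enorm (x - xbar) < d ->
    (f x = +oo%E /\ g x = +oo%E) \/
    exists a b : R,
      [/\ f x = a%:E, g x = b%:E & `|a - b - (fb - gb)| <= e * enorm (x - xbar)].
Proof.
move=> fxbar gxbar fN gN /elimsup_at_lt[d d_gt0 quot_lt]; exists d => // x x_near.
have /andP[x_neq _] := x_near.
exact: ediff_quot_lt fxbar gxbar (fN x) (gN x) x_neq (quot_lt x x_near).
Qed.

Lemma eproper_addr f L : eproper f -> eproper (fun x => f x + (L x)%:E)%E.
Proof.
move=> [fN [x0 fx0]]; split=> [x|]; first by case: (f x) (fN x).
by exists x0; move: fx0; case: (f x0).
Qed.

Lemma elsc_addr f L (k : R) : elsc f -> 0 < k ->
  (forall x y, `|L y - L x| <= k * enorm (y - x)) ->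
  elsc (fun x => f x + (L x)%:E)%E.
Proof.
move=> lsc_f k_gt0 L_lip x a a_lt.
have [b [ab b_lt]] : exists b : R, a - L x < b /\ (b%:E < f x)%E.
  move: a_lt; case: (f x) => [r| |] //=.
    by rewrite -EFinD !lte_fin => ?; exists ((a - L x + r) / 2); rewrite lte_fin; lra.
  by move=> _; exists (a - L x + 1); rewrite ltry; split => //; lra.
have [d d_gt0 f_gt] := lsc_f x b b_lt.
have q_gt0 : 0 < (b - (a - L x)) / k by rewrite divr_gt0 // subr_gt0.
exists (Num.min d ((b - (a - L x)) / k)); first by rewrite lt_min d_gt0 q_gt0.
move=> y; rewrite lt_min => /andP[/f_gt b_lt_fy]; rewrite ltr_pdivlMr // => y_near.
have := L_lip x y; rewrite ler_norml => /andP[L_ge _].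
by move: b_lt_fy; case: (f y) => [r| |] //=; rewrite -?EFinD ?lte_fin ?ltry // => ?; lra.
Qed.

Lemma econvex_addr f L : econvex f ->
  (forall x y t, L (t *: x + (1 - t) *: y) = t * L x + (1 - t) * L y) ->
  econvex (fun x => f x + (L x)%:E)%E.
Proof.
move=> convex_f L_affine x y t t_gt0 t_lt1 /=; have := convex_f x y t t_gt0 t_lt1.
rewrite L_affine !muleDr ?fin_num_adde_defl // addeACA -!EFinM -EFinD.
exact: leeD2r.
Qed.

Lemma elimsup_ediff_quot_addr f L xbar (k : R) :
  f xbar \is a fin_num -> (forall x, f x != -oo%E) -> L xbar = 0 -> 0 <= k ->
  (forall x y, `|L y - L x| <= k * enorm (y - x)) ->
  (elimsup_at (ediff_quot f (fun x => f x + (L x)%:E)%E xbar) xbar <= k%:E)%E.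
Proof.
move=> fxbar fN Lxbar k_ge0 L_lip.
apply: (elimsup_at_le (d := 1)) => // x /andP[x_gt0 _].
rewrite /ediff_quot /ediff Lxbar; move: fxbar (fN x).
case: (f xbar) => [fb| |] // _; case: (f x) => [a| |] // _ /=.
  have -> : a - (a + L x) - (fb - (fb + 0)) = - (L x - L xbar) by rewrite Lxbar; ring.
  by rewrite normrN -EFinM lee_fin ler_pdivrMr // (le_trans (L_lip _ _)) ?enorm_distC.
by rewrite addr0 subrr subr0 normr0 mul0e lee_fin.
Qed.

Lemma edist_sublevel0_tilt_ge f xbar h (k t : R) :
  (forall y, (0 <= f y)%E) -> enorm h = 1 -> 0 < k ->
  (t%:E <= Defs.edist (xbar + t *: h)
     (sublevel0 (fun y => f y + (k * inner h (y - xbar))%:E)%E))%E.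
Proof.
move=> f_ge0 h1 k_gt0; apply/ereal_infP => _ [y Sy <-]; rewrite lee_fin.
have inner_le0 : inner h (y - xbar) <= 0.
  move: Sy (f_ge0 y); rewrite /sublevel0 /=; case: (f y) => [b| |] //=.
  rewrite -EFinD !lee_fin => S_le fy_ge0.
  by rewrite -(pmulr_rle0 _ k_gt0); lra.
set x := xbar + t *: h.
have -> : t = inner h (x - xbar) by rewrite addrC addKr innerZr -enorm_sqr h1 expr1n mulr1.
have -> : x - y = (x - xbar) - (y - xbar) by rewrite opprB addrA subrK.
have h_le1 : enorm h <= 1 by rewrite h1.
have := ler_norm_inner (x - xbar - (y - xbar)) h_le1.
rewrite innerBr => /(le_trans (ler_norm _)); lra.
Qed.

End Perturbation.

Section Equivalences.
Variables (R : realType) (m : nat) (f : 'rV[R]_m -> \bar R) (xbar : 'rV[R]_m).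
Notation V := 'rV[R]_m.

Definition min_dir_deriv : \bar R :=
  ereal_inf [set dir_deriv f xbar h | h in [set h | enorm h = 1]].

Definition stable_error_bound : Prop :=
  exists c eps : R, [/\ 0 < c, 0 < eps &
    forall g : V -> \bar R,
      eproper g -> elsc g -> econvex g -> sublevel0 g xbar ->
      (elimsup_at (ediff_quot f g xbar) xbar <= eps%:E)%E ->
      (tau_min g xbar <= c%:E)%E].

Definition tilted_error_bound : Prop :=
  exists c eps : R, [/\ 0 < c, 0 < eps &
    forall u : V, enorm u <= 1 ->
      (tau_min (fun x => f x + (eps * inner u (x - xbar))%:E)%E xbar <= c%:E)%E].

Hypotheses (proper_f : eproper f) (convex_f : econvex f) (f0 : f xbar = 0%E).

Let fN : forall x, f x != -oo%E. Proof. by case: proper_f. Qed.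

Lemma sublevel0_finite g : eproper g -> sublevel0 g xbar ->
  exists2 gb : R, g xbar = gb%:E & gb <= 0.
Proof.
move=> [gN _]; rewrite /sublevel0 /=; case: (g xbar) (gN xbar) => [gb| |] // _.
by rewrite lee_fin; exists gb.
Qed.

Lemma stable_error_bound_of_min_dir_deriv_lt0 :
  (min_dir_deriv < 0)%E -> stable_error_bound.
Proof.
move=> /ereal_inf_lt[_ [h /= h1 <-] dd_lt0].
have [k [k_gt0 dd_lt]] : exists k : R, 0 < k /\ (dir_deriv f xbar h < (- k)%:E)%E.
  move: dd_lt0; case: (dir_deriv f xbar h) => [r| |] //.
    by rewrite lte_fin => ?; exists (- r / 2); rewrite lte_fin; split; lra.
  by exists 1; rewrite ltNyr.
have [t0 t0_gt0 dq_lt] := dir_deriv_lt_dquot convex_f f0 dd_lt.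
exists (4 / k), (k / 4); split; rewrite ?divr_gt0 // => g proper_g _ convex_g gxbar_le0 quot_le.
have [gb gxbar gb_le0] := sublevel0_finite proper_g gxbar_le0.
have [gN _] := proper_g.
have /(elimsup_ediff_quot_lt f0 gxbar fN gN)[d d_gt0 near_xbar] :
    (elimsup_at (ediff_quot f g xbar) xbar < (k / 2)%:E)%E.
  by apply: le_lt_trans quot_le _; rewrite lte_fin; lra.
set t := Num.min t0 (d / 2).
have t_gt0 : 0 < t by rewrite lt_min t0_gt0 divr_gt0.
set z := xbar + t *: h.
have zt : enorm (z - xbar) = t by rewrite addrC addKr enormZ h1 mulr1 gtr0_norm.
have t_le : t <= t0 by rewrite ge_min lexx.
have := dq_lt t t_gt0 t_le; rewrite /dquot f0 sube0 -/z.
have : 0 < enorm (z - xbar) < d by rewrite zt t_gt0 gt_min; apply/orP; right; lra.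
move=> /near_xbar[[-> _]|[a [b [fz gz ab]]]].
  by rewrite gt0_mulye ?lte_fin ?invr_gt0 // ltNge leey.
rewrite fz -EFinM lte_fin ltr_pdivrMr // => a_lt.
have b_lt : b < - (k * t / 2).
  by move: ab; rewrite ler_norml => /andP[? ?]; nra.
apply: (tau_min_le gN (d := t)); rewrite ?divr_gt0 // => x r x_near gx r_gt0.
have xz : enorm (x - z) <= t + t.
  rewrite (_ : x - z = (x - xbar) + (xbar - z)); last by rewrite addrA subrK.
  by apply: le_trans (ler_enormD _ _) _; rewrite (enorm_distC xbar) zt lerD2r.
apply: (sublevel0_segment convex_g _ gx r_gt0 gz); [by rewrite divr_ge0 // ltW | nra |].
apply: le_trans xz _; rewrite mulrAC ler_pdivlMr //; nra.
Qed.

Lemma stable_error_bound_of_min_dir_deriv_gt0 :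
  (0 < min_dir_deriv)%E -> stable_error_bound.
Proof.
move=> min_gt0.
have [al al_gt0 al_le] : exists2 al : R, 0 < al &
    forall h, enorm h = 1 -> (al%:E <= dir_deriv f xbar h)%E.
  have dd_ge h : enorm h = 1 -> (min_dir_deriv <= dir_deriv f xbar h)%E.
    by move=> h1; apply: ereal_inf_lbound; exists h.
  move: min_gt0 dd_ge; case: (min_dir_deriv) => [r| |] //.
    by rewrite lte_fin => r_gt0 dd_ge; exists r.
  by move=> _ dd_ge; exists 1 => // h /dd_ge; rewrite leye_eq => /eqP ->; rewrite leey.
have growth := dir_deriv_growth convex_f f0 fN al_le.
exists (2 / al), (al / 4); split; rewrite ?divr_gt0 // => g proper_g _ convex_g gxbar_le0 quot_le.
have [gb gxbar gb_le0] := sublevel0_finite proper_g gxbar_le0.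
have [gN _] := proper_g.
have /(elimsup_ediff_quot_lt f0 gxbar fN gN)[d d_gt0 near_xbar] :
    (elimsup_at (ediff_quot f g xbar) xbar < (al / 2)%:E)%E.
  by apply: le_lt_trans quot_le _; rewrite lte_fin; lra.
apply: (tau_min_le gN (d := d / 2)); rewrite ?divr_gt0 // => x r x_near gx r_gt0.
have x_neq : x != xbar by apply/eqP => x_eq; move: gxbar; rewrite -x_eq gx => -[]; lra.
have rho_gt0 : 0 < enorm (x - xbar) by rewrite enorm_gt0 subr_eq0.
have : 0 < enorm (x - xbar) < d by rewrite rho_gt0 /=; lra.
move=> /near_xbar[[_ gx_oo]|[a [b [fx gx' ab]]]]; first by rewrite gx_oo in gx.
move: gx'; rewrite gx => -[b_eq]; rewrite -b_eq in ab.
have := growth x; rewrite fx add0r lee_fin => a_ge.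
apply: (sublevel0_segment convex_g _ gx r_gt0 gxbar gb_le0); first by rewrite divr_ge0 // ltW.
rewrite mulrAC ler_pdivlMr //; move: ab; rewrite ler_norml => /andP[? ?]; nra.
Qed.

Lemma tilted_error_bound_of_stable :
  elsc f -> stable_error_bound -> tilted_error_bound.
Proof.
move=> lsc_f [c [eps [c_gt0 eps_gt0 stable]]].
have eps2_gt0 : 0 < eps / 2 by rewrite divr_gt0.
exists c, (eps / 2); split => // u u_le1.
pose L x := eps / 2 * inner u (x - xbar).
have L_lip x y : `|L y - L x| <= eps / 2 * enorm (y - x).
  rewrite /L -mulrBr -innerBr opprB addrA subrK normrM gtr0_norm //.
  by rewrite ler_pM2l // ler_norm_inner.
have L_affine x y t : L (t *: x + (1 - t) *: y) = t * L x + (1 - t) * L y.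
  by rewrite /L convex_combB innerDr !innerZr; ring.
have Lxbar : L xbar = 0 by rewrite /L innerBr subrr mulr0.
apply: stable.
- exact: (eproper_addr L).
- exact: (elsc_addr lsc_f eps2_gt0 L_lip).
- exact: (econvex_addr convex_f L_affine).
- by rewrite /sublevel0 /= f0 -/(L xbar) Lxbar add0e.
- have := elimsup_ediff_quot_addr _ fN Lxbar (ltW eps2_gt0) L_lip.
  by rewrite f0 => /(_ isT)/le_trans; apply; rewrite lee_fin; lra.
Qed.

Lemma tau_min_tilt_ge (h : V) (c k : R) :
  (forall y, (0 <= f y)%E) -> enorm h = 1 -> 0 < c -> 0 < k -> k <= (4 * c)^-1 ->
  (dir_deriv f xbar h < ((4 * c)^-1)%:E)%E ->
  ((2 * c)%:E <= tau_min (fun x => f x + (k * inner h (x - xbar))%:E)%E xbar)%E.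
Proof.
move=> f_ge0 h1 c_gt0 k_gt0 k_le dd_lt.
have [t0 t0_gt0 dq_lt] := dir_deriv_lt_dquot convex_f f0 dd_lt.
apply: tau_min_ge => d d_gt0.
set t := Num.min t0 d.
have t_gt0 : 0 < t by rewrite lt_min t0_gt0.
have xt : xbar + t *: h - xbar = t *: h by rewrite addrC addKr.
exists (xbar + t *: h); first by rewrite xt enormZ h1 mulr1 gtr0_norm // ge_min lexx orbT.
apply: lt_le_trans (edist_sublevel0_tilt_ge _ _ f_ge0 h1 k_gt0).
have := dq_lt t t_gt0; rewrite ge_min lexx => /(_ isT).
rewrite /dquot f0 sube0 xt innerZr -enorm_sqr h1 expr1n mulr1.
case: (f (xbar + t *: h)) (f_ge0 (xbar + t *: h)) => [a| |] // a_ge0; last first.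
  by rewrite gt0_mulye ?lte_fin ?invr_gt0 // ltNge leey.
rewrite -EFinD -EFin_max -!EFinM !lte_fin ltr_pdivrMr // => a_lt.
rewrite lee_fin in a_ge0; rewrite max_l; last by rewrite addr_ge0 // ltW // mulr_gt0.
have kt_le : k * t <= t / (4 * c) by rewrite mulrC ler_pM2l.
rewrite -ltr_pdivlMl ?mulr_gt0 //.
have -> : (2 * c)^-1 * t = t / (4 * c) + t / (4 * c) by field; rewrite gt_eqF.
lra.
Qed.

Lemma min_dir_deriv_neq0_of_tilted :
  tilted_error_bound -> min_dir_deriv != 0%E.
Proof.
move=> [c [eps [c_gt0 eps_gt0 tilted]]]; apply/eqP => min0.
have f_ge0 y : (0 <= f y)%E.
  have dd_ge0 h : enorm h = 1 -> ((0 : R)%:E <= dir_deriv f xbar h)%E.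
    by move=> h1; rewrite -[X in (X <= _)%E]min0; apply: ereal_inf_lbound; exists h.
  by have := dir_deriv_growth convex_f f0 fN dd_ge0 y; rewrite mul0r addr0.
have /ereal_inf_lt[_ [h /= h1 <-] dd_lt] : (min_dir_deriv < ((4 * c)^-1)%:E)%E.
  by rewrite min0 lte_fin invr_gt0 mulr_gt0.
set lam := Num.min 1 ((4 * c)^-1 / eps).
have lam_gt0 : 0 < lam by rewrite lt_min ltr01 divr_gt0 ?invr_gt0 ?mulr_gt0.
have eps_lam : eps * lam <= (4 * c)^-1 by rewrite mulrC -ler_pdivlMr // ge_min lexx orbT.
have u_le1 : enorm (lam *: h) <= 1 by rewrite enormZ h1 mulr1 gtr0_norm // ge_min lexx.
have := tau_min_tilt_ge f_ge0 h1 c_gt0 (mulr_gt0 eps_gt0 lam_gt0) eps_lam dd_lt.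
have -> : (fun x => f x + (eps * lam * inner h (x - xbar))%:E)%E =
          (fun x => f x + (eps * inner (lam *: h) (x - xbar))%:E)%E.
  by apply/funext => x; rewrite innerZl mulrA.
by move=> /le_trans/(_ (tilted _ u_le1)); rewrite lee_fin; lra.
Qed.

End Equivalences.

Theorem theorem5 (R : realType) (m : nat) (f : 'rV[R]_m -> \bar R)
    (xbar : 'rV[R]_m) :
  eproper f -> elsc f -> econvex f -> f xbar = 0%E ->
  let cond_i :=
    ereal_inf [set dir_deriv f xbar h | h in [set h | enorm h = 1]] != 0%E in
  let cond_ii :=
    exists c eps : R, [/\ 0 < c, 0 < eps &
      forall g : 'rV[R]_m -> \bar R,
        eproper g -> elsc g -> econvex g -> sublevel0 g xbar ->
        (elimsup_at (fun x =>
            (`| ediff (f x) (g x) - (f xbar - g xbar) |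
               * ((enorm (x - xbar)%R)^-1)%:E)%E) xbar <= eps%:E)%E ->
        (tau_min g xbar <= c%:E)%E] in
  let cond_iii :=
    exists c eps : R, [/\ 0 < c, 0 < eps &
      forall u : 'rV[R]_m, enorm u <= 1 ->
        (tau_min (fun x => f x + (eps * inner u (x - xbar))%R%:E)%E xbar
           <= c%:E)%E] in
  (cond_i <-> cond_ii) /\ (cond_ii <-> cond_iii).
Proof.
move=> proper_f lsc_f convex_f f0 cond_i cond_ii cond_iii.
have i_ii : cond_i -> cond_ii.
  rewrite /cond_i neq_lt => /orP[min_lt0|min_gt0].
  - exact: stable_error_bound_of_min_dir_deriv_lt0.
  - exact: stable_error_bound_of_min_dir_deriv_gt0.
have ii_iii : cond_ii -> cond_iii := tilted_error_bound_of_stable proper_f convex_f f0 lsc_f.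
have iii_i : cond_iii -> cond_i := min_dir_deriv_neq0_of_tilted proper_f convex_f f0.
by split; [split=> [/i_ii|/ii_iii/iii_i] | split=> [/ii_iii|/iii_i/i_ii]].
Qed.
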